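(* Let $O$ be a Hermitian operator on $n$ qubits and, for each parameter vector $\boldsymbol{\theta}$, let $\rho(\boldsymbol{\theta})$ be the noise-free output state with cost $C(\boldsymbol{\theta})=\mathrm{Tr}[\rho(\boldsymbol{\theta})O]$. Suppose the circuit contains $L$ instances of global depolarizing noise with error probability $s$, so that the noisy cost is $\widetilde{C}(\boldsymbol{\theta},s)=\mathrm{Tr}[((1-s)^L\rho(\boldsymbol{\theta})+(1-(1-s)^L)\mathbb{I}/2^n)O]$. Fix a base error probability $p\in[0,1)$ and a boost factor $a_1>1$ with $a_1p\le1$, and consider a Zero Noise Extrapolation estimator with two noise levels of the form $$C_m(\boldsymbol{\theta})=\frac{A\,\widetilde{C}(\boldsymbol{\theta},p)-B\,\widetilde{C}(\boldsymbol{\theta},a_1p)}{D}+E,$$ with real constants $A,B,D,E$ independent of $\boldsymbol{\theta}$, $D\neq0$, whose ratio $c=A/B$ is: $c=a_1$ for Richardson extrapolation; $c=a_1 r(\varepsilon)^{t(\varepsilon)}/r(a_1\varepsilon)^{t(a_1\varepsilon)}$ for exponential extrapolation (with $r,t$ the positive functions of the noise level appearing in the exponential noise model and $\varepsilon$ the base noise level); and $c=a_1^{-(L+1)}$ for NIBP extrapolation. Assume $C_m$ is estimated from independent estimates of $\widetilde{C}(\boldsymbol{\theta},p)$ and $\widetilde{C}(\boldsymbol{\theta},a_1p)$, so that $\mathrm{Var}[C_m(\boldsymbol{\theta})]=(A^2\mathrm{Var}[\widetilde{C}(\boldsymbol{\theta},p)]+B^2\mathrm{Var}[\widetilde{C}(\boldsymbol{\theta},a_1p)])/D^2$,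 and that $\mathrm{Var}[\widetilde{C}(\boldsymbol{\theta},a_1p)]\ge\mathrm{Var}[\widetilde{C}(\boldsymbol{\theta},p)]$ for all $\boldsymbol{\theta}$. For two parameter vectors $\boldsymbol{\theta}_1,\boldsymbol{\theta}_2$ with $C(\boldsymbol{\theta}_1)\ne C(\boldsymbol{\theta}_2)$, let $\chi_{depol}$ be the relative resolvability of these two points. Then $$\chi_{depol}\le\frac{\Big(c-\frac{(1-a_1p)^L}{(1-p)^L}\Big)^2}{c^2+1},$$ and consequently $\chi_{depol}\le1$ for each of the three extrapolation strategies.
   Context: The error mitigation cost is $\gamma=\mathrm{Var}[C_m(\boldsymbol{\theta})]/\mathrm{Var}[\widetilde{C}(\boldsymbol{\theta},p)]$ (evaluated at either point). The relative resolvability of two points is $\chi=\frac{1}{\gamma}\Big(\frac{\Delta C_m}{\Delta\widetilde{C}}\Big)^2$, where $\Delta C_m=C_m(\boldsymbol{\theta}_1)-C_m(\boldsymbol{\theta}_2)$ and $\Delta\widetilde{C}=\widetilde{C}(\boldsymbol{\theta}_1,p)-\widetilde{C}(\boldsymbol{\theta}_2,p)$; it is the ratio of the number of shots needed to resolve the two points to fixed precision without and with mitigation. *)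

From HB Require Import structures.
From mathcomp Require Import all_boot all_order all_algebra.
From mathcomp Require Import complex.
From mathcomp Require Import reals exp.

Unset Printing Implicit Defensive.
Import Order.TTheory GRing.Theory Num.Theory.
Local Open Scope ring_scope.

Definition toC {R : rcfType} (x : R) : R[i] := x%:C%C.

Definition adjmx {R : rcfType} {m k : nat} (M : 'M[R[i]]_(m, k)) : 'M[R[i]]_(k, m) :=
  (map_mx (@conjc R) M)^T.

Definition hermitian_mx {R : rcfType} {m : nat} (M : 'M[R[i]]_m) : Prop :=
  M = adjmx M.

(* Positive semidefinite: <v, M v> is real and nonnegative for all v. *)
Definition psd {R : rcfType} {m : nat} (M : 'M[R[i]]_m) : Prop :=
  forall v : 'cV[R[i]]_m, 0 <= (adjmx v *m M *m v) 0 0.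

Definition density_matrix {R : rcfType} {m : nat} (M : 'M[R[i]]_m) : Prop :=
  [/\ hermitian_mx M, psd M & \tr M = 1].

Definition cost {R : rcfType} {m : nat} (rho O : 'M[R[i]]_m) : R[i] :=
  \tr (rho *m O).

Definition depol_state {R : rcfType} (n L : nat) (s : R) (rho : 'M[R[i]]_(2 ^ n))
  : 'M[R[i]]_(2 ^ n) :=
  (toC ((1 - s) ^+ L)) *: rho + (toC ((1 - (1 - s) ^+ L) / (2 ^ n)%:R)) *: 1%:M.

Definition noisy_cost {R : rcfType} (n L : nat) (s : R) (rho O : 'M[R[i]]_(2 ^ n)) : R[i] :=
  cost (depol_state n L s rho) O.

Definition zne_estimator {R : rcfType} (A B D E : R) (Cp Ca : R[i]) : R[i] :=
  ((toC A) * Cp - (toC B) * Ca) / (toC D) + (toC E).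

Definition var_mitigated {R : rcfType} (A B D Vp Va : R) : R :=
  (A ^+ 2 * Vp + B ^+ 2 * Va) / D ^+ 2.

(* Error mitigation cost gamma = Var[C_m] / Var[C~(.,p)]. *)
Definition mitigation_cost {R : rcfType} (Vm Vp : R) : R := Vm / Vp.

(* Relative resolvability chi = (1/gamma) (Delta C_m / Delta C~)^2. *)
Definition resolvability {R : rcfType} (gamma : R) (dCm dCt : R[i]) : R[i] :=
  (toC (gamma^-1)) * (dCm / dCt) ^+ 2.

(* Global depolarizing noise rescales every cost difference by the damping
   factor (1 - s)^L and leaves the identity contribution unchanged, so the
   ratio of the mitigated and unmitigated differences is the constant
   (B / D) (c - q) with q = (1 - a1 p)^L / (1 - p)^L.  The variance of the
   estimator is at least (A^2 + B^2) Var / D^2, which turns the resolvability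
   into at most (c - q)^2 / (c^2 + 1); for c >= 0 and 0 <= q <= 1 this is at
   most 1. *)
From HB Require Import structures.
From mathcomp Require Import all_boot all_order all_algebra.
From mathcomp Require Import reals exp.
From mathcomp Require Import complex.
From mathcomp Require Import ring lra.
Import Order.TTheory GRing.Theory Num.Theory.
Local Open Scope ring_scope.

Section DepolarizedCosts.

Variables (R : rcfType) (n L : nat).

Lemma noisy_costE (s : R) (rho O : 'M[R[i]]_(2 ^ n)) :
  noisy_cost n L s rho O =
  toC ((1 - s) ^+ L) * cost rho O + toC ((1 - (1 - s) ^+ L) / (2 ^ n)%:R) * \tr O.
Proof.
by rewrite /noisy_cost /cost /depol_state mulmxDl -!scalemxAl mul1mx mxtraceD !mxtraceZ.
Qed.

Lemma noisy_costB (s : R) (rho1 rho2 O : 'M[R[i]]_(2 ^ n)) :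
  noisy_cost n L s rho1 O - noisy_cost n L s rho2 O =
  toC ((1 - s) ^+ L) * (cost rho1 O - cost rho2 O).
Proof. by rewrite !noisy_costE; ring. Qed.

End DepolarizedCosts.

Lemma zne_estimatorB (R : rcfType) (A B D E : R) (x1 y1 x2 y2 : R[i]) :
  zne_estimator A B D E x1 y1 - zne_estimator A B D E x2 y2 =
  (toC A * (x1 - x2) - toC B * (y1 - y2)) / toC D.
Proof. by rewrite /zne_estimator; ring. Qed.

Lemma toC_eq0 (R : rcfType) (x : R) : (toC x == 0) = (x == 0).
Proof. by rewrite /toC -(rmorph0 (real_complex R)) (inj_eq (@complexI R)). Qed.

Lemma zne_depol_ratio {R : rcfType} {n L : nat} (A B D E s1 s2 : R)
    (rho1 rho2 O : 'M[R[i]]_(2 ^ n)) :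
  let Ct s rho := noisy_cost n L s rho O in
  let Cm rho := zne_estimator A B D E (Ct s1 rho) (Ct s2 rho) in
  cost rho1 O != cost rho2 O -> (1 - s1) ^+ L != 0 -> D != 0 ->
  (Cm rho1 - Cm rho2) / (Ct s1 rho1 - Ct s1 rho2) =
  toC ((A * (1 - s1) ^+ L - B * (1 - s2) ^+ L) / (D * (1 - s1) ^+ L)).
Proof.
move=> Ct Cm dC k0 D0; rewrite /Cm zne_estimatorB /Ct !noisy_costB.
rewrite /toC !(rmorphM, rmorphB, fmorphV) /=.
by field; rewrite subr_eq0 dC -!/(toC _) !toC_eq0 k0 D0.
Qed.

Lemma resolvability_real {R : rcfType} (gamma x : R) (dCm dCt : R[i]) :
  dCm / dCt = toC x -> resolvability gamma dCm dCt = toC (gamma^-1 * x ^+ 2).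
Proof. by rewrite /resolvability /toC rmorphM rmorphXn => ->. Qed.

Section VarianceBound.

Variables (R : rcfType) (A B D Vp Va : R).
Hypotheses (B0 : B != 0) (D0 : D != 0) (Vp0 : 0 <= Vp) (VpVa : Vp <= Va).

(* For [Vp = 0] the mitigation cost is [Vm / 0 = 0], whose inverse is [0]. *)
Lemma inv_mitigation_cost_le :
  (mitigation_cost (var_mitigated A B D Vp Va) Vp)^-1 * (B / D) ^+ 2
  <= ((A / B) ^+ 2 + 1)^-1.
Proof.
rewrite /mitigation_cost /var_mitigated.
have [->|Vpn0] := eqVneq Vp 0; first by rewrite invr0 mulr0 invr0 mul0r invr_ge0 addr_ge0 ?sqr_ge0.
have Vpp : 0 < Vp by rewrite lt_def Vpn0.
have B2 : 0 < B ^+ 2 by rewrite exprn_even_gt0.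
have Vsum : 0 < A ^+ 2 * Vp + B ^+ 2 * Va.
  have BVa : 0 < B ^+ 2 * Va by rewrite mulr_gt0 // (lt_le_trans Vpp).
  by rewrite ltr_wpDl // mulr_ge0 ?sqr_ge0.
have -> : ((A ^+ 2 * Vp + B ^+ 2 * Va) / D ^+ 2 / Vp)^-1 * (B / D) ^+ 2
          = B ^+ 2 * Vp / (A ^+ 2 * Vp + B ^+ 2 * Va).
  by field; rewrite gt_eqF // D0 Vpn0.
have -> : ((A / B) ^+ 2 + 1)^-1 = B ^+ 2 / (A ^+ 2 + B ^+ 2).
  by field; rewrite B0 gt_eqF ?ltr_wpDl ?sqr_ge0 // gt_eqF ?ltr_wpDl ?sqr_ge0.
rewrite ler_pdivrMr // [_ / _ * _]mulrAC ler_pdivlMr ?ltr_wpDl ?sqr_ge0 // -mulrA ler_pM2l //.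
have : B ^+ 2 * Vp <= B ^+ 2 * Va by rewrite ler_pM2l.
lra.
Qed.

Lemma resolvability_factor_le (x : R) :
  (mitigation_cost (var_mitigated A B D Vp Va) Vp)^-1 * (B / D * x) ^+ 2
  <= x ^+ 2 / ((A / B) ^+ 2 + 1).
Proof.
rewrite exprMn mulrA [x ^+ 2 / _]mulrC.
by apply: ler_wpM2r; [exact: sqr_ge0 | exact: inv_mitigation_cost_le].
Qed.

End VarianceBound.

Lemma sqr_subr_le_sqr_add1 (R : realFieldType) (c q : R) :
  0 <= c -> 0 <= q <= 1 -> (c - q) ^+ 2 / (c ^+ 2 + 1) <= 1.
Proof.
move=> c0 /andP[q0 q1].
rewrite ler_pdivrMr ?ltr_wpDl ?sqr_ge0 // mul1r.
nra.
Qed.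

Lemma damping_ratio_in01 (R : realFieldType) (L : nat) (p a1 : R) :
  0 <= p -> p < 1 -> 1 <= a1 -> a1 * p <= 1 ->
  0 <= (1 - a1 * p) ^+ L / (1 - p) ^+ L <= 1.
Proof.
move=> p0 p1 a11 a1p.
have kp : 0 < (1 - p) ^+ L by rewrite exprn_gt0 // subr_gt0.
rewrite divr_ge0 ?exprn_ge0 ?subr_ge0 ?(ltW p1) //= ler_pdivrMr // mul1r.
rewrite lerXn2r ?nnegrE ?subr_ge0 ?(ltW p1) //; nra.
Qed.

Theorem proposition1 (R : realType) (n L : nat) (Theta : Type)
  (rho : Theta -> 'M[R[i]]_(2 ^ n)) (O : 'M[R[i]]_(2 ^ n))
  (Var : Theta -> R -> R) (p a1 A B D E : R) (th1 th2 th0 : Theta) :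
  hermitian_mx O ->
  (forall th, density_matrix (rho th)) ->
  0 <= p -> p < 1 -> 1 < a1 -> a1 * p <= 1 ->
  D != 0 -> B != 0 ->
  (forall th s, 0 <= Var th s) ->
  (forall th, Var th p <= Var th (a1 * p)) ->
  cost (rho th1) O != cost (rho th2) O ->
  (th0 = th1 \/ th0 = th2) ->
  let Ct s th := noisy_cost n L s (rho th) O in
  let Cm th := zne_estimator A B D E (Ct p th) (Ct (a1 * p) th) in
  let gamma := mitigation_cost (var_mitigated A B D (Var th0 p) (Var th0 (a1 * p)))
                               (Var th0 p) in
  let chi := resolvability gamma (Cm th1 - Cm th2) (Ct p th1 - Ct p th2) in
  let c := A / B in
  let q := (1 - a1 * p) ^+ L / (1 - p) ^+ L in
  chi <= toC ((c - q) ^+ 2 / (c ^+ 2 + 1)) /\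
  (c = a1 -> chi <= 1) /\
  (forall (r t : R -> R) (eps : R),
     0 < r eps -> 0 < r (a1 * eps) -> 0 < t eps -> 0 < t (a1 * eps) ->
     c = a1 * r eps `^ t eps / r (a1 * eps) `^ t (a1 * eps) -> chi <= 1) /\
  (c = a1 ^- L.+1 -> chi <= 1).
Proof.
move=> _ _ p0 p1 a11 a1p D0 B0 V0 Vle dC _ Ct Cm gamma chi c q.
have kp0 : (1 - p) ^+ L != 0 by rewrite expf_eq0 subr_eq0 (gt_eqF p1) andbF.
have ratio : (A * (1 - p) ^+ L - B * (1 - a1 * p) ^+ L) / (D * (1 - p) ^+ L)
             = B / D * (c - q) by rewrite /c /q; field; rewrite kp0 B0 D0.
have dratio := zne_depol_ratio A B D E p (a1 * p) (rho th1) (rho th2) O dC kp0 D0.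
rewrite ratio in dratio.
have main : chi <= toC ((c - q) ^+ 2 / (c ^+ 2 + 1)).
  rewrite /chi (resolvability_real gamma (B / D * (c - q)) _ _ dratio).
  by rewrite /toC lecR; apply: resolvability_factor_le.
have le1 : 0 <= c -> chi <= 1.
  move=> c0; apply: (le_trans main); rewrite -(rmorph1 (real_complex R)) /toC lecR.
  by rewrite sqr_subr_le_sqr_add1 // damping_ratio_in01 // ltW.
have a1_ge0 : 0 <= a1 by rewrite ltW // (lt_trans ltr01).
split; first exact: main.
split; first by move=> hc; apply: le1; rewrite hc.
split; first by move=> r t eps _ _ _ _ hc; apply: le1; rewrite hc divr_ge0 ?mulr_ge0 ?powR_ge0.
by move=> hc; apply: le1; rewrite hc invr_ge0 exprn_ge0.
Qed.
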